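(* Let $B$ be the open unit disk, let $U=(u,v)\in C^1(\overline B;\mathbb R^2)$ be harmonic in $B$, and let $\Phi=U|_{\partial B}$. Let $\tilde u$ be a harmonic conjugate of $u$ and $f=u+i\tilde u$. If $\det DU>0$ on $\partial B$, then $\mathrm{WN}(f(\partial B))=\mathrm{WN}(\Phi(\partial B))$.
   Context: Points of $\mathbb R^2$ are identified with complex numbers, $z=re^{i\theta}$. For a closed curve parameterized by $\Phi\in C^1(\partial B;\mathbb R^2)$ with $\partial\Phi/\partial\theta\neq0$ for every $\theta\in[0,2\pi]$, its winding number is the integer $\mathrm{WN}=\frac1{2\pi}\int_{\partial B}\mathrm d\,\arg\left(\frac{\partial\Phi}{\partial\theta}\right)$; $\mathrm{WN}(f(\partial B))$ is defined analogously using $\theta\mapsto f(e^{i\theta})$. *)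

From Stdlib Require Import Reals ZArith.
From Coquelicot Require Import Coquelicot.
Open Scope R_scope.

Definition in_B (x y : R) : Prop := x ^ 2 + y ^ 2 < 1.
Definition in_cl_B (x y : R) : Prop := x ^ 2 + y ^ 2 <= 1.
Definition on_dB (x y : R) : Prop := x ^ 2 + y ^ 2 = 1.

Definition cont_on_cl_B (w : R -> R -> R) : Prop :=
  forall x y, in_cl_B x y ->
    forall eps : R, 0 < eps -> exists delta : R, 0 < delta /\
      forall x' y', in_cl_B x' y' ->
        (x' - x) ^ 2 + (y' - y) ^ 2 < delta ^ 2 ->
        Rabs (w x' y' - w x y) < eps.

(* w ∈ C^1(closed B) with (continuously extended) partials wx, wy:
   w is continuous on the closed disk, wx, wy are its partial derivatives
   in B, and wx, wy are continuous on the closed disk. *)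
Definition C1_cl_B (w wx wy : R -> R -> R) : Prop :=
  cont_on_cl_B w /\ cont_on_cl_B wx /\ cont_on_cl_B wy /\
  forall x y, in_B x y ->
    is_derive (fun t => w t y) x (wx x y) /\
    is_derive (fun t => w x t) y (wy x y).

Definition harmonic_on_B (w : R -> R -> R) : Prop :=
  exists wx wy wxx wxy wyx wyy : R -> R -> R,
    forall x y, in_B x y ->
      is_derive (fun t => w t y) x (wx x y) /\
      is_derive (fun t => w x t) y (wy x y) /\
      is_derive (fun t => wx t y) x (wxx x y) /\
      is_derive (fun t => wx x t) y (wxy x y) /\
      is_derive (fun t => wy t y) x (wyx x y) /\
      is_derive (fun t => wy x t) y (wyy x y) /\
      continuous (fun p : R * R => wxx (fst p) (snd p)) (x, y) /\
      continuous (fun p : R * R => wxy (fst p) (snd p)) (x, y) /\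
      continuous (fun p : R * R => wyx (fst p) (snd p)) (x, y) /\
      continuous (fun p : R * R => wyy (fst p) (snd p)) (x, y) /\
      wxx x y + wyy x y = 0.

(* ut is a harmonic conjugate of u in B: u + i ut is holomorphic in B
   (complex differentiable at every point of B). *)
Definition harmonic_conjugate_on_B (u ut : R -> R -> R) : Prop :=
  forall z : C, in_B (fst z) (snd z) ->
    ex_derive (fun w : C => (u (fst w) (snd w), ut (fst w) (snd w)) : C) z.

(* WN of a closed curve theta |-> (g1 theta, g2 theta):
   the curve is C^1 on [0,2pi] with nonvanishing derivative (d1,d2), and
   k = (1/2pi) ∫ d arg(d1 + i d2), i.e. there is a continuous argument
   function phi of the tangent with phi(2pi) - phi(0) = 2 pi k. *)
Definition is_WN (g1 g2 : R -> R) (k : Z) : Prop :=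
  exists d1 d2 phi : R -> R,
    (forall t, 0 <= t <= 2 * PI ->
        is_derive g1 t (d1 t) /\ is_derive g2 t (d2 t) /\
        continuity_pt d1 t /\ continuity_pt d2 t /\
        (d1 t, d2 t) <> (0, 0)) /\
    continuity phi /\
    (forall t, 0 <= t <= 2 * PI ->
        d1 t = sqrt (d1 t ^ 2 + d2 t ^ 2) * cos (phi t) /\
        d2 t = sqrt (d1 t ^ 2 + d2 t ^ 2) * sin (phi t)) /\
    phi (2 * PI) - phi 0 = 2 * PI * IZR k.

From Stdlib Require Import Reals ZArith Lra Psatz.
From Coquelicot Require Import Coquelicot.
Open Scope R_scope.

(* The tangent vectors of the two boundary curves share their first component: with
   [t] the unit tangent and [n] the unit normal of the circle, [Phi' = (d_t u, d_t v)]
   and, by the Cauchy-Riemann equations, [f' = (d_t u, d_t u~) = (d_t u, d_n u)].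
   Where [d_t u = 0] the Jacobian condition reads [d_n u * d_t v > 0], so the two
   tangents are never antipodal.  The oriented angle between them is then a continuous
   function with values in (-PI, PI), and adding it to a continuous argument of [Phi']
   yields a continuous argument of [f'] with the same total increment over the circle. *)

Lemma continuity_pt_cos_comp f x : continuity_pt f x -> continuity_pt (fun t => cos (f t)) x.
Proof. intro H; apply (continuity_pt_comp f cos); [exact H | apply continuity_cos]. Qed.

Lemma continuity_pt_sin_comp f x : continuity_pt f x -> continuity_pt (fun t => sin (f t)) x.
Proof. intro H; apply (continuity_pt_comp f sin); [exact H | apply continuity_sin]. Qed.

Lemma continuity_pt_atan_comp f x : continuity_pt f x -> continuity_pt (fun t => atan (f t)) x.
Proof.
  intro H; apply (continuity_pt_comp f atan); [exact H |].
  apply derivable_continuous_pt, derivable_pt_atan.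
Qed.

Lemma continuity_pt_sqrt_comp f x :
  continuity_pt f x -> 0 <= f x -> continuity_pt (fun t => sqrt (f t)) x.
Proof. intros H H0; apply (continuity_pt_comp f sqrt); [exact H | now apply continuity_pt_sqrt]. Qed.

Lemma continuity_pt_pow2 f x : continuity_pt f x -> continuity_pt (fun t => f t ^ 2) x.
Proof.
  intro H. apply (continuity_pt_ext (fun t => f t * f t)); [intro; ring |].
  now apply continuity_pt_mult.
Qed.

Lemma continuity_pt_cst c x : continuity_pt (fun _ => c) x.
Proof. apply continuity_pt_const; intros a b; reflexivity. Qed.

Lemma continuity_pt_1_lipschitz f x :
  (forall t, Rabs (f t - f x) <= Rabs (t - x)) -> continuity_pt f x.
Proof.
  intros Hf eps Heps. exists eps; split; [exact Heps |].
  intros t [_ Ht]. unfold R_dist in *. eapply Rle_lt_trans; [apply Hf | exact Ht].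
Qed.

Lemma continuity_pt_Rmin_r c x : continuity_pt (fun t => Rmin t c) x.
Proof.
  apply continuity_pt_1_lipschitz; intro t.
  unfold Rmin; destruct (Rle_dec t c), (Rle_dec x c); unfold Rabs;
    repeat destruct Rcase_abs; lra.
Qed.

Lemma continuity_pt_clamp a b x : continuity_pt (fun t => Rmax a (Rmin t b)) x.
Proof.
  apply continuity_pt_1_lipschitz; intro t.
  unfold Rmax, Rmin; repeat destruct Rle_dec; unfold Rabs;
    repeat destruct Rcase_abs; lra.
Qed.

Ltac continuity_tac := repeat first
  [ apply continuity_pt_plus | apply continuity_pt_minus | apply continuity_pt_mult
  | apply continuity_pt_opp | apply continuity_pt_inv | apply continuity_pt_pow2
  | apply continuity_pt_sqrt_comp | apply continuity_pt_atan_comp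
  | apply continuity_pt_cos_comp | apply continuity_pt_sin_comp
  | apply continuity_pt_cst ].

(** * Angles between plane vectors *)

Definition not_antipodal (a1 a2 b1 b2 : R) : Prop :=
  0 < sqrt (a1 ^ 2 + a2 ^ 2) * sqrt (b1 ^ 2 + b2 ^ 2) + (a1 * b1 + a2 * b2).

(* Half-angle formula: when [a] and [b] are not antipodal, the oriented angle from
   [a] to [b] is [2 atan (det(a,b) / (|a| |b| + a.b))], a continuous function of
   [a] and [b] with values in (-PI, PI). *)
Definition angle_between (a1 a2 b1 b2 : R) : R :=
  2 * atan ((a1 * b2 - a2 * b1) /
    (sqrt (a1 ^ 2 + a2 ^ 2) * sqrt (b1 ^ 2 + b2 ^ 2) + (a1 * b1 + a2 * b2))).

Definition polar_angle_on (L : R) (a1 a2 phi : R -> R) : Prop :=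
  forall t, 0 <= t <= L ->
    a1 t = sqrt (a1 t ^ 2 + a2 t ^ 2) * cos (phi t) /\
    a2 t = sqrt (a1 t ^ 2 + a2 t ^ 2) * sin (phi t).

Lemma not_antipodal_nonzero_l a1 a2 b1 b2 :
  not_antipodal a1 a2 b1 b2 -> 0 < a1 ^ 2 + a2 ^ 2.
Proof.
  unfold not_antipodal; intro H.
  destruct (Rle_lt_or_eq_dec 0 (a1 ^ 2 + a2 ^ 2)) as [|E]; [nra | assumption |].
  assert (a1 = 0 /\ a2 = 0) as [-> ->] by nra.
  rewrite <- E, sqrt_0 in H. lra.
Qed.

Lemma not_antipodal_sym a1 a2 b1 b2 :
  not_antipodal a1 a2 b1 b2 -> not_antipodal b1 b2 a1 a2.
Proof. unfold not_antipodal; intro; lra. Qed.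

Lemma cos_sin_double_atan x y r :
  r * r = x * x + y * y -> 0 < r + x ->
  cos (2 * atan (y / (r + x))) * r = x /\ sin (2 * atan (y / (r + x))) * r = y.
Proof.
  intros Hr Hrx.
  set (z := y / (r + x)).
  assert (Hz : z * (r + x) = y) by (unfold z; field; lra).
  assert (Hr0 : 0 < r) by nra.
  assert (Hz2 : 1 + z ^ 2 = 2 * r / (r + x)).
  { apply Rmult_eq_reg_r with ((r + x) * (r + x)); [| nra].
    replace ((1 + z ^ 2) * ((r + x) * (r + x)))
      with ((r + x) * (r + x) + (z * (r + x)) * (z * (r + x))) by ring.
    rewrite Hz. field_simplify; nra. }
  assert (Hs : sqrt (1 + z²) * sqrt (1 + z²) = 1 + z ^ 2).
  { rewrite sqrt_sqrt; unfold Rsqr; nra. }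
  assert (Hsp : 0 < sqrt (1 + z²)) by (apply sqrt_lt_R0; unfold Rsqr; nra).
  rewrite cos_2a_cos, sin_2a, cos_atan, sin_atan.
  replace (2 * (1 / sqrt (1 + z²)) * (1 / sqrt (1 + z²)) - 1)
    with (2 / (sqrt (1 + z²) * sqrt (1 + z²)) - 1) by (field; lra).
  replace (2 * (z / sqrt (1 + z²)) * (1 / sqrt (1 + z²)))
    with (2 * z / (sqrt (1 + z²) * sqrt (1 + z²))) by (field; lra).
  rewrite Hs, Hz2. split; [| rewrite <- Hz]; field; lra.
Qed.

Lemma polar_angle_between a1 a2 b1 b2 phi :
  not_antipodal a1 a2 b1 b2 ->
  a1 = sqrt (a1 ^ 2 + a2 ^ 2) * cos phi ->
  a2 = sqrt (a1 ^ 2 + a2 ^ 2) * sin phi ->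
  b1 = sqrt (b1 ^ 2 + b2 ^ 2) * cos (phi + angle_between a1 a2 b1 b2) /\
  b2 = sqrt (b1 ^ 2 + b2 ^ 2) * sin (phi + angle_between a1 a2 b1 b2).
Proof.
  intros Hab Ha1 Ha2.
  pose proof (not_antipodal_nonzero_l _ _ _ _ Hab) as Ha.
  unfold not_antipodal, angle_between in *.
  set (ra := sqrt (a1 ^ 2 + a2 ^ 2)) in *.
  set (rb := sqrt (b1 ^ 2 + b2 ^ 2)) in *.
  assert (Hra : ra * ra = a1 ^ 2 + a2 ^ 2) by (apply sqrt_sqrt; lra).
  assert (Hrb : rb * rb = b1 ^ 2 + b2 ^ 2) by (apply sqrt_sqrt; nra).
  assert (Hra0 : 0 < ra) by (apply sqrt_lt_R0; exact Ha).
  destruct (cos_sin_double_atan (a1 * b1 + a2 * b2) (a1 * b2 - a2 * b1) (ra * rb))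
    as [Hc Hs]; [| lra |].
  { replace (ra * rb * (ra * rb)) with (ra * ra * (rb * rb)) by ring.
    rewrite Hra, Hrb. ring. }
  set (d := 2 * atan _) in *.
  rewrite cos_plus, sin_plus.
  split; apply Rmult_eq_reg_l with (ra * ra); try nra.
  - replace (ra * ra * (rb * (cos phi * cos d - sin phi * sin d))) with
      ((ra * cos phi) * (cos d * (ra * rb)) - (ra * sin phi) * (sin d * (ra * rb))) by ring.
    rewrite Hc, Hs, <- Ha1, <- Ha2, Hra. ring.
  - replace (ra * ra * (rb * (sin phi * cos d + cos phi * sin d))) with
      ((ra * sin phi) * (cos d * (ra * rb)) + (ra * cos phi) * (sin d * (ra * rb))) by ring.
    rewrite Hc, Hs, <- Ha1, <- Ha2, Hra. ring.
Qed.

Lemma angle_between_self a1 a2 : angle_between a1 a2 a1 a2 = 0.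
Proof.
  unfold angle_between. replace (a1 * a2 - a2 * a1) with 0 by ring.
  unfold Rdiv. rewrite Rmult_0_l, atan_0. ring.
Qed.

Lemma continuity_pt_angle_between a1 a2 b1 b2 x :
  continuity_pt a1 x -> continuity_pt a2 x -> continuity_pt b1 x -> continuity_pt b2 x ->
  not_antipodal (a1 x) (a2 x) (b1 x) (b2 x) ->
  continuity_pt (fun t => angle_between (a1 t) (a2 t) (b1 t) (b2 t)) x.
Proof.
  unfold not_antipodal, angle_between; intros.
  continuity_tac; try assumption; nra.
Qed.

Lemma polar_angle_exists p q :
  0 < p ^ 2 + q ^ 2 -> exists th,
    p = sqrt (p ^ 2 + q ^ 2) * cos th /\ q = sqrt (p ^ 2 + q ^ 2) * sin th.
Proof.
  intro H.
  assert (Hr : sqrt (p ^ 2 + q ^ 2) * sqrt (p ^ 2 + q ^ 2) = p ^ 2 + q ^ 2)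
    by (apply sqrt_sqrt; lra).
  assert (E1 : sqrt (1 ^ 2 + 0 ^ 2) = 1) by (replace (1 ^ 2 + 0 ^ 2) with 1 by ring; apply sqrt_1).
  destruct (Rlt_or_le 0 (sqrt (1 ^ 2 + 0 ^ 2) * sqrt (p ^ 2 + q ^ 2) + (1 * p + 0 * q)))
    as [Hp | Hp].
  - exists (0 + angle_between 1 0 p q). apply polar_angle_between; [exact Hp |..];
      rewrite E1; [rewrite cos_0 | rewrite sin_0]; ring.
  - exists PI. rewrite cos_PI, sin_PI. rewrite E1 in Hp.
    pose proof (sqrt_pos (p ^ 2 + q ^ 2)).
    assert (q = 0) by nra. subst q. split; nra.
Qed.

Lemma not_antipodal_of_dot_or_det a1 a2 b1 b2 :
  0 < a1 * b1 + a2 * b2 \/ a1 * b2 - a2 * b1 <> 0 -> not_antipodal a1 a2 b1 b2.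
Proof.
  unfold not_antipodal.
  set (dot := a1 * b1 + a2 * b2). set (det := a1 * b2 - a2 * b1).
  assert (Lagrange : sqrt (a1 ^ 2 + a2 ^ 2) * sqrt (b1 ^ 2 + b2 ^ 2) = sqrt (dot ^ 2 + det ^ 2)).
  { rewrite <- sqrt_mult by nra. f_equal. unfold dot, det. ring. }
  rewrite Lagrange. intros [Hdot | Hdet].
  - pose proof (sqrt_pos (dot ^ 2 + det ^ 2)). lra.
  - assert (Hlt : sqrt (dot ^ 2) < sqrt (dot ^ 2 + det ^ 2)).
    { apply sqrt_lt_1_alt. split; [apply pow2_ge_0 |].
      assert (0 < det ^ 2) by (rewrite <- Rsqr_pow2; apply Rsqr_pos_lt; exact Hdet). lra. }
    rewrite <- (Rsqr_pow2 dot), sqrt_Rsqr_abs, Rsqr_pow2 in Hlt.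
    pose proof (Rle_abs (- dot)). rewrite Rabs_Ropp in *. lra.
Qed.

(** * Continuous arguments and winding *)

Lemma not_antipodal_of_near_directions a1 a2 b1 b2 :
  0 < a1 ^ 2 + a2 ^ 2 -> 0 < b1 ^ 2 + b2 ^ 2 ->
  Rabs (a1 / sqrt (a1 ^ 2 + a2 ^ 2) - b1 / sqrt (b1 ^ 2 + b2 ^ 2)) < 1 / 2 ->
  Rabs (a2 / sqrt (a1 ^ 2 + a2 ^ 2) - b2 / sqrt (b1 ^ 2 + b2 ^ 2)) < 1 / 2 ->
  not_antipodal a1 a2 b1 b2.
Proof.
  intros Ha Hb H1 H2. unfold not_antipodal.
  set (ra := sqrt (a1 ^ 2 + a2 ^ 2)) in *.
  set (rb := sqrt (b1 ^ 2 + b2 ^ 2)) in *.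
  assert (Hra : ra * ra = a1 ^ 2 + a2 ^ 2) by (apply sqrt_sqrt; lra).
  assert (Hrb : rb * rb = b1 ^ 2 + b2 ^ 2) by (apply sqrt_sqrt; lra).
  assert (Hra0 : 0 < ra) by (apply sqrt_lt_R0; exact Ha).
  assert (Hrb0 : 0 < rb) by (apply sqrt_lt_R0; exact Hb).
  set (n1 := a1 / ra) in *. set (n2 := a2 / ra) in *.
  set (m1 := b1 / rb) in *. set (m2 := b2 / rb) in *.
  assert (Hn : n1 ^ 2 + n2 ^ 2 = 1).
  { unfold n1, n2. replace ((a1 / ra) ^ 2 + (a2 / ra) ^ 2) with ((a1 ^ 2 + a2 ^ 2) / (ra * ra))
      by (field; lra).
    rewrite <- Hra. field; lra. }
  assert (Hm : m1 ^ 2 + m2 ^ 2 = 1).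
  { unfold m1, m2. replace ((b1 / rb) ^ 2 + (b2 / rb) ^ 2) with ((b1 ^ 2 + b2 ^ 2) / (rb * rb))
      by (field; lra).
    rewrite <- Hrb. field; lra. }
  apply Rabs_def2 in H1. apply Rabs_def2 in H2.
  replace (ra * rb + (a1 * b1 + a2 * b2)) with (ra * rb * (1 + (n1 * m1 + n2 * m2)))
    by (unfold n1, n2, m1, m2; field; lra).
  apply Rmult_lt_0_compat; nra.
Qed.

Lemma polar_angle_mesh (a1 a2 : R -> R) L :
  (forall t, continuity_pt a1 t) -> (forall t, continuity_pt a2 t) ->
  (forall t, 0 < a1 t ^ 2 + a2 t ^ 2) ->
  exists h, 0 < h /\ forall s t, 0 <= s <= L -> 0 <= t <= L -> Rabs (s - t) < h ->
    not_antipodal (a1 s) (a2 s) (a1 t) (a2 t).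
Proof.
  intros Ha1 Ha2 Ha.
  assert (Hnorm : forall t, continuity_pt (fun t => sqrt (a1 t ^ 2 + a2 t ^ 2)) t).
  { intro t. apply continuity_pt_sqrt_comp; [| specialize (Ha t); lra].
    continuity_tac; auto. }
  assert (Hsqrt : forall t, sqrt (a1 t ^ 2 + a2 t ^ 2) <> 0)
    by (intro t; apply Rgt_not_eq, sqrt_lt_R0, Ha).
  assert (Hhalf : 0 < 1 / 2) by lra.
  destruct (Heine_cor2 (f := fun t => a1 t / sqrt (a1 t ^ 2 + a2 t ^ 2)) (a := 0) (b := L)
    (fun t _ => continuity_pt_div _ _ t (Ha1 t) (Hnorm t) (Hsqrt t)) (mkposreal _ Hhalf))
    as [d1 Hd1].
  destruct (Heine_cor2 (f := fun t => a2 t / sqrt (a1 t ^ 2 + a2 t ^ 2)) (a := 0) (b := L)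
    (fun t _ => continuity_pt_div _ _ t (Ha2 t) (Hnorm t) (Hsqrt t)) (mkposreal _ Hhalf))
    as [d2 Hd2].
  exists (Rmin d1 d2). split; [apply Rmin_pos; apply cond_pos |].
  intros s t Hs Ht Hst.
  apply not_antipodal_of_near_directions; [apply Ha | apply Ha | apply Hd1 | apply Hd2];
    try assumption.
  - eapply Rlt_le_trans; [exact Hst | apply Rmin_l].
  - eapply Rlt_le_trans; [exact Hst | apply Rmin_r].
Qed.

Lemma polar_angle_extend (a1 a2 phi0 : R -> R) T0 T :
  (forall t, continuity_pt a1 t) -> (forall t, continuity_pt a2 t) ->
  continuity phi0 -> polar_angle_on T0 a1 a2 phi0 -> 0 <= T0 <= T ->
  (forall t, T0 <= t <= T -> not_antipodal (a1 T0) (a2 T0) (a1 t) (a2 t)) ->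
  exists phi, continuity phi /\ polar_angle_on T a1 a2 phi.
Proof.
  intros Ha1 Ha2 Hphi0 Hpolar HT Hclose.
  set (clamp := fun t => Rmax T0 (Rmin t T)).
  assert (Hclamp : forall t, T0 <= clamp t <= T).
  { intro t. unfold clamp. split; [apply Rmax_l |].
    apply Rmax_lub; [lra | apply Rmin_r]. }
  exists (fun t => phi0 (Rmin t T0)
            + angle_between (a1 T0) (a2 T0) (a1 (clamp t)) (a2 (clamp t))).
  split.
  - intro t. apply continuity_pt_plus.
    + apply (continuity_pt_comp (fun t => Rmin t T0)); [apply continuity_pt_Rmin_r | apply Hphi0].
    + apply (continuity_pt_angle_between (fun _ => a1 T0) (fun _ => a2 T0)
               (fun t => a1 (clamp t)) (fun t => a2 (clamp t)));
        try apply continuity_pt_cst.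
      * apply (continuity_pt_comp clamp); [apply continuity_pt_clamp | apply Ha1].
      * apply (continuity_pt_comp clamp); [apply continuity_pt_clamp | apply Ha2].
      * apply Hclose, Hclamp.
  - intros t Ht. destruct (Rle_or_lt t T0) as [Hle | Hlt].
    + assert (Ec : clamp t = T0).
      { unfold clamp. rewrite Rmin_left by lra. apply Rmax_left; lra. }
      rewrite Rmin_left, Ec, angle_between_self, Rplus_0_r by lra.
      apply Hpolar; lra.
    + assert (Ec : clamp t = t).
      { unfold clamp. rewrite Rmin_left by lra. apply Rmax_right; lra. }
      rewrite Rmin_right, Ec by lra.
      apply polar_angle_between; [apply Hclose; lra | apply Hpolar; lra ..].
Qed.

Lemma continuous_polar_angle_exists (a1 a2 : R -> R) L :
  (forall t, continuity_pt a1 t) -> (forall t, continuity_pt a2 t) ->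
  (forall t, 0 < a1 t ^ 2 + a2 t ^ 2) -> 0 <= L ->
  exists phi, continuity phi /\ polar_angle_on L a1 a2 phi.
Proof.
  intros Ha1 Ha2 Ha HL.
  destruct (polar_angle_mesh a1 a2 L Ha1 Ha2 Ha) as [h [Hh Hmesh]].
  assert (Hind : forall n : nat, forall T, 0 <= T <= L -> T <= INR n * (h / 2) ->
    exists phi, continuity phi /\ polar_angle_on T a1 a2 phi).
  { induction n as [| n IH]; intros T HT HTn.
    - simpl in HTn. assert (T = 0) by lra. subst T.
      destruct (polar_angle_exists (a1 0) (a2 0) (Ha 0)) as [th Hth].
      exists (fun _ => th). split; [intro; apply continuity_pt_cst |].
      intros t Ht. replace t with 0 by lra. exact Hth.
    - rewrite S_INR in HTn.
      set (T0 := Rmin T (INR n * (h / 2))).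
      assert (HT0 : 0 <= T0 <= T).
      { unfold T0. split; [apply Rmin_glb; [lra |] | apply Rmin_l].
        apply Rmult_le_pos; [apply pos_INR | lra]. }
      destruct (IH T0 ltac:(lra) (Rmin_r _ _)) as [phi0 [Hphi0 Hpolar0]].
      apply (polar_angle_extend a1 a2 phi0 T0 T); auto.
      intros t Ht. apply Hmesh; try lra.
      unfold T0 in *. revert Ht. apply Rmin_case_strong; intros; apply Rabs_def1; lra. }
  destruct (archimed (L / (h / 2))) as [Hup _].
  apply (Hind (Z.to_nat (up (L / (h / 2))))); [lra |].
  assert (0 <= L / (h / 2)) by (apply Rdiv_le_0_compat; lra).
  rewrite INR_IZR_INZ, Z2Nat.id by (apply le_IZR; simpl; lra).
  apply Rmult_le_reg_r with (/ (h / 2)); [apply Rinv_0_lt_compat; lra |].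
  rewrite Rmult_assoc, Rinv_r by lra. unfold Rdiv in Hup. lra.
Qed.

Lemma cos_sin_eq_2PI_multiple a b :
  cos a = cos b -> sin a = sin b -> exists k : Z, a - b = 2 * PI * IZR k.
Proof.
  intros Hc Hs.
  assert (H1 : cos (a - b) = 1).
  { rewrite cos_minus, Hc, Hs. pose proof (sin2_cos2 b). unfold Rsqr in *. lra. }
  assert (H2 : sin ((a - b) / 2) = 0).
  { replace (a - b) with (2 * ((a - b) / 2)) in H1 by field.
    rewrite cos_2a_sin in H1. nra. }
  destruct (sin_eq_0_0 _ H2) as [k Hk]. exists k. lra.
Qed.

Lemma polar_angle_closed_increment (a1 a2 phi : R -> R) L :
  0 <= L -> a1 L = a1 0 -> a2 L = a2 0 -> 0 < a1 0 ^ 2 + a2 0 ^ 2 ->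
  polar_angle_on L a1 a2 phi -> exists k : Z, phi L - phi 0 = 2 * PI * IZR k.
Proof.
  intros HL E1 E2 Ha Hpolar.
  destruct (Hpolar L) as [A1 A2]; [lra |].
  destruct (Hpolar 0) as [B1 B2]; [lra |].
  rewrite E1, E2 in A1, A2.
  assert (0 < sqrt (a1 0 ^ 2 + a2 0 ^ 2)) by (apply sqrt_lt_R0; exact Ha).
  apply cos_sin_eq_2PI_multiple; apply Rmult_eq_reg_l with (sqrt (a1 0 ^ 2 + a2 0 ^ 2)); lra.
Qed.

Lemma same_winding_of_not_antipodal (a1 a2 b1 b2 : R -> R) :
  (forall t, continuity_pt a1 t) -> (forall t, continuity_pt a2 t) ->
  (forall t, continuity_pt b1 t) -> (forall t, continuity_pt b2 t) ->
  (forall t, not_antipodal (a1 t) (a2 t) (b1 t) (b2 t)) ->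
  a1 (2 * PI) = a1 0 -> a2 (2 * PI) = a2 0 -> b1 (2 * PI) = b1 0 -> b2 (2 * PI) = b2 0 ->
  exists (k : Z) (phi psi : R -> R),
    continuity phi /\ polar_angle_on (2 * PI) a1 a2 phi /\
    phi (2 * PI) - phi 0 = 2 * PI * IZR k /\
    continuity psi /\ polar_angle_on (2 * PI) b1 b2 psi /\
    psi (2 * PI) - psi 0 = 2 * PI * IZR k.
Proof.
  intros Ha1 Ha2 Hb1 Hb2 Hab Pa1 Pa2 Pb1 Pb2.
  assert (Ha : forall t, 0 < a1 t ^ 2 + a2 t ^ 2)
    by (intro t; exact (not_antipodal_nonzero_l _ _ _ _ (Hab t))).
  assert (H2PI : 0 <= 2 * PI) by (pose proof PI_RGT_0; lra).
  destruct (continuous_polar_angle_exists a1 a2 (2 * PI) Ha1 Ha2 Ha H2PI) as [phi [Hphi Hpolar]].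
  destruct (polar_angle_closed_increment a1 a2 phi (2 * PI) H2PI Pa1 Pa2 (Ha 0) Hpolar)
    as [k Hk].
  exists k, phi, (fun t => phi t + angle_between (a1 t) (a2 t) (b1 t) (b2 t)).
  do 3 (split; [assumption |]). split; [| split].
  - intro t. apply continuity_pt_plus; [apply Hphi | apply continuity_pt_angle_between; auto].
  - intros t Ht. apply polar_angle_between; [apply Hab | apply Hpolar; exact Ht ..].
  - rewrite Pa1, Pa2, Pb1, Pb2. lra.
Qed.

Lemma Rabs_sin_le y : Rabs (sin y) <= Rabs y.
Proof.
  assert (Hpos : forall y, 0 <= y -> Rabs (sin y) <= y).
  { intros z Hz. pose proof (SIN_bound z). pose proof PI2_1. apply Rabs_le. split.
    - destruct (Rle_or_lt z PI) as [Hle | Hlt]; [pose proof (sin_ge_0 z Hz Hle) |]; lra.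
    - destruct (Req_dec z 0) as [-> | Hz0]; [rewrite sin_0; lra |].
      left. apply sin_lt_x. lra. }
  destruct (Rle_or_lt 0 y) as [Hy | Hy].
  - rewrite (Rabs_right y) by lra. exact (Hpos y Hy).
  - rewrite <- (Ropp_involutive y), sin_neg, !Rabs_Ropp, (Rabs_left y) by lra.
    apply Hpos. lra.
Qed.

Lemma circle_dist2_le xi th :
  (cos xi - cos th) ^ 2 + (sin xi - sin th) ^ 2 <= (xi - th) ^ 2.
Proof.
  assert (E : (cos xi - cos th) ^ 2 + (sin xi - sin th) ^ 2 = 4 * sin ((xi - th) / 2) ^ 2).
  { pose proof (sin2_cos2 xi). pose proof (sin2_cos2 th).
    pose proof (cos_minus xi th) as Hc.
    replace (xi - th) with (2 * ((xi - th) / 2)) in Hc at 1 by field.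
    rewrite cos_2a_sin in Hc. unfold Rsqr in *. nra. }
  rewrite E.
  pose proof (Rabs_sin_le ((xi - th) / 2)) as Hs.
  apply Rsqr_le_abs_1 in Hs. unfold Rsqr in Hs. nra.
Qed.

Lemma polar_dist2_le r xi th :
  (r * cos xi - cos th) ^ 2 + (r * sin xi - sin th) ^ 2 <= 2 * (1 - r) ^ 2 + 2 * (xi - th) ^ 2.
Proof.
  pose proof (circle_dist2_le xi th) as Hcirc. pose proof (sin2_cos2 xi) as Hxi.
  unfold Rsqr in *. set (p := cos xi - cos th) in *. set (q := sin xi - sin th) in *.
  replace (r * cos xi - cos th) with ((r - 1) * cos xi + p) by (unfold p; ring).
  replace (r * sin xi - sin th) with ((r - 1) * sin xi + q) by (unfold q; ring).
  assert (0 <= ((r - 1) * cos xi - p) ^ 2 + ((r - 1) * sin xi - q) ^ 2)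
    by (apply Rplus_le_le_0_compat; apply pow2_ge_0).
  assert (E : (1 - r) ^ 2 = (r - 1) ^ 2 * (sin xi * sin xi + cos xi * cos xi))
    by (rewrite Hxi; ring).
  rewrite E. nra.
Qed.

Lemma in_cl_B_polar r th : 0 <= r <= 1 -> in_cl_B (r * cos th) (r * sin th).
Proof. intro Hr. unfold in_cl_B. pose proof (sin2_cos2 th). unfold Rsqr in *. nra. Qed.

Lemma in_B_polar r th : 0 <= r < 1 -> in_B (r * cos th) (r * sin th).
Proof. intro Hr. unfold in_B. pose proof (sin2_cos2 th). unfold Rsqr in *. nra. Qed.

Lemma in_cl_B_circle th : in_cl_B (cos th) (sin th).
Proof. rewrite <- (Rmult_1_l (cos th)), <- (Rmult_1_l (sin th)). apply in_cl_B_polar; lra. Qed.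

Lemma continuity_pt_on_circle F th :
  cont_on_cl_B F -> continuity_pt (fun t => F (cos t) (sin t)) th.
Proof.
  intros HF eps Heps.
  destruct (HF _ _ (in_cl_B_circle th) eps Heps) as [eta [Heta P]].
  exists eta. split; [exact Heta |]. intros t [_ Ht]. simpl in *. unfold R_dist in *.
  apply P; [apply in_cl_B_circle |].
  pose proof (circle_dist2_le t th). apply Rabs_def2 in Ht. nra.
Qed.

Lemma radial_limit w th gam :
  cont_on_cl_B w -> 0 < gam -> exists n, 0 < n /\ forall r, 1 - n < r <= 1 ->
    Rabs (w (r * cos th) (r * sin th) - w (cos th) (sin th)) < gam.
Proof.
  intros Hw Hgam.
  destruct (Hw _ _ (in_cl_B_circle th) gam Hgam) as [eta [Heta P]].
  exists (Rmin 1 eta). split; [apply Rmin_pos; lra |]. intros r Hr.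
  pose proof (Rmin_l 1 eta). pose proof (Rmin_r 1 eta).
  apply P; [apply in_cl_B_polar; lra |].
  pose proof (sin2_cos2 th). unfold Rsqr in *.
  replace ((r * cos th - cos th) ^ 2 + (r * sin th - sin th) ^ 2)
    with ((r - 1) ^ 2 * (sin th * sin th + cos th * cos th)) by ring.
  nra.
Qed.

Lemma cont_on_cl_B_comp2 (F f g : R -> R -> R) :
  (forall a b, continuity_2d_pt F a b) -> cont_on_cl_B f -> cont_on_cl_B g ->
  cont_on_cl_B (fun x y => F (f x y) (g x y)).
Proof.
  intros HF Hf Hg x y Hxy eps Heps.
  destruct (HF (f x y) (g x y) (mkposreal eps Heps)) as [d Hd]. simpl in Hd.
  destruct (Hf x y Hxy d (cond_pos d)) as [d1 [Hd1 P1]].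
  destruct (Hg x y Hxy d (cond_pos d)) as [d2 [Hd2 P2]].
  exists (Rmin d1 d2). split; [apply Rmin_pos; lra |].
  intros x' y' H' Hdist.
  assert (Rmin d1 d2 ^ 2 <= d1 ^ 2) by (apply pow_incr; split; [apply Rmin_glb; lra | apply Rmin_l]).
  assert (Rmin d1 d2 ^ 2 <= d2 ^ 2) by (apply pow_incr; split; [apply Rmin_glb; lra | apply Rmin_r]).
  apply Hd; [apply P1 | apply P2]; auto; lra.
Qed.

Lemma cont_on_cl_B_fst : cont_on_cl_B (fun x _ => x).
Proof.
  intros x y _ eps Heps. exists eps. split; [exact Heps |].
  intros x' y' _ H. pose proof (pow2_ge_0 (y' - y)).
  rewrite <- (Rabs_right eps) by lra. apply Rsqr_lt_abs_0. unfold Rsqr. nra.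
Qed.

Lemma cont_on_cl_B_snd : cont_on_cl_B (fun _ y => y).
Proof.
  intros x y _ eps Heps. exists eps. split; [exact Heps |].
  intros x' y' _ H. pose proof (pow2_ge_0 (x' - x)).
  rewrite <- (Rabs_right eps) by lra. apply Rsqr_lt_abs_0. unfold Rsqr. nra.
Qed.

Definition tangential_derivative (wx wy : R -> R -> R) (x y : R) : R :=
  - y * wx x y + x * wy x y.

Lemma cont_on_cl_B_tangential_derivative wx wy :
  cont_on_cl_B wx -> cont_on_cl_B wy -> cont_on_cl_B (tangential_derivative wx wy).
Proof.
  intros Hwx Hwy. unfold tangential_derivative.
  apply (cont_on_cl_B_comp2 Rplus (fun x y => - y * wx x y) (fun x y => x * wy x y)).
  - intros a b. apply continuity_2d_pt_plus; [apply continuity_2d_pt_id1 | apply continuity_2d_pt_id2].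
  - apply (cont_on_cl_B_comp2 (fun a b => - a * b)); [| apply cont_on_cl_B_snd | exact Hwx].
    intros a b. apply continuity_2d_pt_mult;
      [apply continuity_2d_pt_opp, continuity_2d_pt_id1 | apply continuity_2d_pt_id2].
  - apply (cont_on_cl_B_comp2 Rmult); [| apply cont_on_cl_B_fst | exact Hwy].
    intros a b. apply continuity_2d_pt_mult; [apply continuity_2d_pt_id1 | apply continuity_2d_pt_id2].
Qed.

(** * Derivatives along circles *)

Lemma Rabs_between a b t : Rmin a b <= t <= Rmax a b -> Rabs (t - a) <= Rabs (b - a).
Proof.
  unfold Rmin, Rmax. destruct Rle_dec; intro; unfold Rabs; repeat destruct Rcase_abs; lra.
Qed.

Lemma continuity_pt_of_is_derive f df x : is_derive f x df -> continuity_pt f x.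
Proof.
  intro H. apply continuity_pt_filterlim, (ex_derive_continuous (V := R_NormedModule)).
  now exists df.
Qed.

Lemma in_B_open x y : in_B x y ->
  exists rho, 0 < rho /\ forall p q, Rabs (p - x) < rho -> Rabs (q - y) < rho -> in_B p q.
Proof.
  unfold in_B. intro Hxy. set (m := Rmin 1 ((1 - (x ^ 2 + y ^ 2)) / 8)).
  exists m. split; [apply Rmin_pos; lra |]. intros p q Hp Hq.
  pose proof (Rmin_l 1 ((1 - (x ^ 2 + y ^ 2)) / 8)) as Hm1.
  pose proof (Rmin_r 1 ((1 - (x ^ 2 + y ^ 2)) / 8)) as Hm2.
  fold m in Hm1, Hm2. apply Rabs_def2 in Hp. apply Rabs_def2 in Hq.
  replace p with (x + (p - x)) by ring. replace q with (y + (q - y)) by ring.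
  set (a := p - x) in *. set (b := q - y) in *.
  assert (-1 < x < 1) by nra. assert (-1 < y < 1) by nra.
  assert (x * a < m) by nra. assert (y * b < m) by nra.
  assert (a * a < m) by nra. assert (b * b < m) by nra.
  nra.
Qed.

(* Mean value theorem along the two sides of the rectangle with corners (x, y) and (u, v). *)
Lemma C1_differentiable w wx wy x y :
  C1_cl_B w wx wy -> in_B x y -> differentiable_pt_lim w x y (wx x y) (wy x y).
Proof.
  intros [_ [Hwx [Hwy Hd]]] HB eps.
  assert (Hcl : in_cl_B x y) by (unfold in_B, in_cl_B in *; lra).
  assert (He2 : 0 < eps / 2) by (destruct eps; simpl; lra).
  destruct (Hwx x y Hcl (eps / 2) He2) as [dx [Hdx Px]].
  destruct (Hwy x y Hcl (eps / 2) He2) as [dy [Hdy Py]].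
  destruct (in_B_open x y HB) as [rho0 [Hrho0 Hopen]].
  set (rho := Rmin rho0 (Rmin dx dy / 2)).
  assert (Hrho : 0 < rho)
    by (apply Rmin_pos; [lra | pose proof (Rmin_pos dx dy Hdx Hdy); lra]).
  exists (mkposreal rho Hrho). simpl. intros u v Hu Hv.
  assert (Near : forall p q, Rabs (p - x) <= Rabs (u - x) -> Rabs (q - y) <= Rabs (v - y) ->
    in_B p q /\ Rabs (wx p q - wx x y) < eps / 2 /\ Rabs (wy p q - wy x y) < eps / 2).
  { intros p q Hp Hq.
    pose proof (Rmin_l rho0 (Rmin dx dy / 2)) as Hrho1.
    pose proof (Rmin_r rho0 (Rmin dx dy / 2)) as Hrho2. fold rho in Hrho1, Hrho2.
    pose proof (Rmin_l dx dy). pose proof (Rmin_r dx dy).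
    assert (Hpq : (p - x) ^ 2 + (q - y) ^ 2 < Rmin dx dy ^ 2).
    { pose proof (Rmin_pos dx dy Hdx Hdy).
      assert (Hp2 : (p - x)² < (Rmin dx dy / 2)²)
        by (apply Rsqr_lt_abs_1; rewrite (Rabs_right (Rmin dx dy / 2)); lra).
      assert (Hq2 : (q - y)² < (Rmin dx dy / 2)²)
        by (apply Rsqr_lt_abs_1; rewrite (Rabs_right (Rmin dx dy / 2)); lra).
      unfold Rsqr in *. nra. }
    assert (HBpq : in_B p q) by (apply Hopen; lra).
    assert (in_cl_B p q) by (unfold in_B, in_cl_B in *; lra).
    split; [exact HBpq | split; [apply Px | apply Py]]; auto; nra. }
  destruct (MVT_gen (fun t => w t v) x u (fun t => wx t v)) as [c [Hc Ec]].
  { intros t Ht. apply Hd, Near; [apply Rabs_between; lra | lra]. }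
  { intros t Ht. apply (continuity_pt_of_is_derive _ (wx t v)), Hd, Near;
      [apply Rabs_between | ]; lra. }
  destruct (MVT_gen (fun t => w x t) y v (fun t => wy x t)) as [d [Hdd Ed]].
  { intros t Ht. apply Hd, Near; [rewrite Rminus_eq_0, Rabs_R0; apply Rabs_pos |
                                 apply Rabs_between; lra]. }
  { intros t Ht. apply (continuity_pt_of_is_derive _ (wy x t)), Hd, Near;
      [rewrite Rminus_eq_0, Rabs_R0; apply Rabs_pos | apply Rabs_between; lra]. }
  simpl in Ec, Ed.
  destruct (Near c v (Rabs_between _ _ _ Hc) (Rle_refl _)) as [_ [Bx _]].
  destruct (Near x d) as [_ [_ By]];
    [rewrite Rminus_eq_0, Rabs_R0; apply Rabs_pos | exact (Rabs_between _ _ _ Hdd) |].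
  replace (w u v - w x y - (wx x y * (u - x) + wy x y * (v - y))) with
    ((wx c v - wx x y) * (u - x) + (wy x d - wy x y) * (v - y))
    by (replace (w u v - w x y) with ((w u v - w x v) + (w x v - w x y)) by ring;
        rewrite Ec, Ed; ring).
  eapply Rle_trans; [apply Rabs_triang | rewrite !Rabs_mult].
  pose proof (Rmax_l (Rabs (u - x)) (Rabs (v - y))). pose proof (Rmax_r (Rabs (u - x)) (Rabs (v - y))).
  pose proof (Rabs_pos (u - x)). pose proof (Rabs_pos (v - y)).
  pose proof (Rabs_pos (wx c v - wx x y)). pose proof (Rabs_pos (wy x d - wy x y)).
  nra.
Qed.

Lemma is_derive_interior_circle w wx wy r th :
  C1_cl_B w wx wy -> 0 <= r < 1 ->
  is_derive (fun t => w (r * cos t) (r * sin t)) th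
    (tangential_derivative wx wy (r * cos th) (r * sin th)).
Proof.
  intros HC Hr. apply is_derive_Reals.
  pose proof (C1_differentiable w wx wy _ _ HC (in_B_polar r th Hr)) as Hdiff.
  assert (Dc : derivable_pt_lim (fun t => r * cos t) th (r * - sin th))
    by (apply is_derive_Reals; auto_derive; [exact I | ring]).
  assert (Ds : derivable_pt_lim (fun t => r * sin t) th (r * cos th))
    by (apply is_derive_Reals; auto_derive; [exact I | ring]).
  unfold tangential_derivative.
  replace (- (r * sin th) * wx (r * cos th) (r * sin th) + r * cos th * wy (r * cos th) (r * sin th))
    with (wx (r * cos th) (r * sin th) * (r * - sin th) + wy (r * cos th) (r * sin th) * (r * cos th))
    by ring.
  exact (derivable_pt_lim_comp_2d w _ _ th _ _ _ _ Hdiff Dc Ds).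
Qed.

Lemma circle_mean_value w wx wy r a b :
  C1_cl_B w wx wy -> 0 <= r < 1 -> exists xi, Rmin a b <= xi <= Rmax a b /\
    w (r * cos b) (r * sin b) - w (r * cos a) (r * sin a) =
    tangential_derivative wx wy (r * cos xi) (r * sin xi) * (b - a).
Proof.
  intros HC Hr.
  assert (D : forall t, is_derive (fun t => w (r * cos t) (r * sin t)) t
                          (tangential_derivative wx wy (r * cos t) (r * sin t)))
    by (intro t; exact (is_derive_interior_circle w wx wy r t HC Hr)).
  destruct (MVT_gen (fun t => w (r * cos t) (r * sin t)) a b
             (fun t => tangential_derivative wx wy (r * cos t) (r * sin t))) as [xi Hxi];
    [intros t _; apply D | intros t _; exact (continuity_pt_of_is_derive _ _ _ (D t)) |].
  now exists xi.
Qed.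

Lemma derivable_pt_lim_of_bound f x l :
  (forall eps, 0 < eps -> exists d, 0 < d /\ forall h, Rabs h < d ->
     Rabs (f (x + h) - f x - h * l) <= eps * Rabs h) ->
  derivable_pt_lim f x l.
Proof.
  intros H eps Heps.
  destruct (H (eps / 2)) as [d [Hd P]]; [lra |].
  exists (mkposreal d Hd). simpl. intros h Hh0 Hh.
  specialize (P h Hh).
  assert (Ha : 0 < Rabs h) by (apply Rabs_pos_lt; exact Hh0).
  replace ((f (x + h) - f x) / h - l) with ((f (x + h) - f x - h * l) * / h) by (field; exact Hh0).
  rewrite Rabs_mult, Rabs_inv.
  apply Rmult_lt_reg_r with (Rabs h); [exact Ha |].
  rewrite Rmult_assoc, Rinv_l by lra. nra.
Qed.

(* Compare with the circle of radius [r] close to 1: by the mean value theorem the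
   increment there is [h] times a tangential derivative at a point that is close to
   [(cos th0, sin th0)], and the tangential derivative is continuous up to the boundary. *)
Lemma is_derive_boundary_circle w wx wy th0 :
  C1_cl_B w wx wy ->
  is_derive (fun th => w (cos th) (sin th)) th0
    (tangential_derivative wx wy (cos th0) (sin th0)).
Proof.
  intro HC. pose proof HC as [Hw [Hwx [Hwy _]]].
  apply is_derive_Reals, derivable_pt_lim_of_bound. intros eps Heps.
  set (T := tangential_derivative wx wy).
  destruct (cont_on_cl_B_tangential_derivative wx wy Hwx Hwy _ _ (in_cl_B_circle th0) (eps / 2))
    as [eta [Heta HT]]; [lra |].
  exists (eta / 2). split; [lra |]. intros h Hh. cbv beta.
  destruct (Req_dec h 0) as [-> | Hh0].
  { rewrite Rplus_0_r, Rabs_R0, Rmult_0_r, Rmult_0_l, !Rminus_eq_0, Rabs_R0. lra. }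
  set (gam := eps * Rabs h / 4).
  assert (Hgam : 0 < gam) by (unfold gam; pose proof (Rabs_pos_lt h Hh0); nra).
  destruct (radial_limit w (th0 + h) gam Hw Hgam) as [n1 [Hn1 R1]].
  destruct (radial_limit w th0 gam Hw Hgam) as [n2 [Hn2 R2]].
  set (m := Rmin 1 (Rmin (eta / 2) (Rmin n1 n2))).
  assert (Hm : 0 < m) by (repeat apply Rmin_pos; lra).
  assert (Hm1 : m <= 1) by apply Rmin_l.
  assert (Hm_eta : m <= eta / 2) by (eapply Rle_trans; [apply Rmin_r | apply Rmin_l]).
  assert (Hm_n : m <= n1 /\ m <= n2).
  { split; (eapply Rle_trans; [apply Rmin_r |]); (eapply Rle_trans; [apply Rmin_r |]);
      [apply Rmin_l | apply Rmin_r]. }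
  set (r := 1 - m / 2).
  destruct (circle_mean_value w wx wy r th0 (th0 + h) HC) as [xi [Hxi Exi]]; [unfold r; lra |].
  assert (Hxi0 : Rabs (xi - th0) <= Rabs h).
  { pose proof (Rabs_between _ _ _ Hxi) as Hb. now replace (th0 + h - th0) with h in Hb by ring. }
  assert (HTxi : Rabs (T (r * cos xi) (r * sin xi) - T (cos th0) (sin th0)) < eps / 2).
  { apply HT; [apply in_cl_B_polar; unfold r; lra |].
    pose proof (polar_dist2_le r xi th0).
    assert (Hxi2 : (xi - th0)² <= h²) by (apply Rsqr_le_abs_1; exact Hxi0).
    assert (Hh2 : h² < (eta / 2)²)
      by (apply Rsqr_lt_abs_1; rewrite (Rabs_right (eta / 2)) by lra; exact Hh).
    unfold r, Rsqr in *. nra. }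
  specialize (R1 r ltac:(unfold r; lra)). specialize (R2 r ltac:(unfold r; lra)).
  replace (th0 + h - th0) with h in Exi by ring.
  replace (w (cos (th0 + h)) (sin (th0 + h)) - w (cos th0) (sin th0) - h * T (cos th0) (sin th0))
    with (- (w (r * cos (th0 + h)) (r * sin (th0 + h)) - w (cos (th0 + h)) (sin (th0 + h)))
          + (w (r * cos th0) (r * sin th0) - w (cos th0) (sin th0))
          + h * (T (r * cos xi) (r * sin xi) - T (cos th0) (sin th0)))
    by (unfold T in *; rewrite Rmult_minus_distr_l, (Rmult_comm h), <- Exi; ring).
  eapply Rle_trans; [apply Rabs_triang |].
  eapply Rle_trans; [apply Rplus_le_compat_r, Rabs_triang |].
  rewrite Rabs_Ropp, Rabs_mult.
  pose proof (Rabs_pos h). unfold gam in *. nra.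
Qed.

(** * Cauchy-Riemann equations *)

Lemma Rabs_Im_le_Cmod (c : C) : Rabs (Im c) <= Cmod c.
Proof. eapply Rle_trans; [apply Rmax_r | apply Rmax_Cmod]. Qed.

Lemma is_C_derive_bound (f : C -> C) (z l : C) :
  is_derive (K := C_AbsRing) (V := C_NormedModule) f z l ->
  forall eps, 0 < eps -> exists d, 0 < d /\ forall w : C,
    Cmod (w - z)%C < d -> Cmod (f w - f z - (w - z) * l)%C <= eps * Cmod (w - z)%C.
Proof.
  intros [_ H] eps Heps.
  destruct (H z (fun P HP => HP) (mkposreal eps Heps)) as [d Hd].
  exists d. split; [apply cond_pos |]. intros w Hw.
  exact (Hd w Hw).
Qed.

Lemma is_C_derive_horizontal (f : C -> C) x y (l : C) :
  is_derive (K := C_AbsRing) (V := C_NormedModule) f (x, y) l ->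
  derivable_pt_lim (fun t => fst (f (t, y))) x (fst l) /\
  derivable_pt_lim (fun t => snd (f (t, y))) x (snd l).
Proof.
  intro H. pose proof (is_C_derive_bound f _ _ H) as B.
  assert (Hdiff : forall h : R, (((x + h)%R, y) - (x, y))%C = RtoC h)
    by (intro h; apply injective_projections; simpl; ring).
  split; apply derivable_pt_lim_of_bound; intros eps Heps;
    destruct (B eps Heps) as [d [Hd P]]; exists d; split; try exact Hd; intros h Hh;
    specialize (P (x + h, y)); rewrite Hdiff, Cmod_R in P; specialize (P Hh);
    (eapply Rle_trans; [| exact P]).
  - eapply Rle_trans; [| apply re_le_Cmod]. right. f_equal. simpl. ring.
  - eapply Rle_trans; [| apply Rabs_Im_le_Cmod]. right. f_equal. simpl. ring.
Qed.

Lemma is_C_derive_vertical (f : C -> C) x y (l : C) :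
  is_derive (K := C_AbsRing) (V := C_NormedModule) f (x, y) l ->
  derivable_pt_lim (fun t => fst (f (x, t))) y (- snd l) /\
  derivable_pt_lim (fun t => snd (f (x, t))) y (fst l).
Proof.
  intro H. pose proof (is_C_derive_bound f _ _ H) as B.
  assert (Hdiff : forall h : R, ((x, (y + h)%R) - (x, y))%C = (RtoC h * Ci)%C)
    by (intro h; apply injective_projections; simpl; ring).
  assert (Hmod : forall h : R, Cmod (RtoC h * Ci)%C = Rabs h)
    by (intro h; rewrite Cmod_mult, Cmod_Ci, Cmod_R; ring).
  split; apply derivable_pt_lim_of_bound; intros eps Heps;
    destruct (B eps Heps) as [d [Hd P]]; exists d; split; try exact Hd; intros h Hh;
    specialize (P (x, y + h)); rewrite Hdiff, Hmod in P; specialize (P Hh);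
    (eapply Rle_trans; [| exact P]).
  - eapply Rle_trans; [| apply re_le_Cmod]. right. f_equal. simpl. ring.
  - eapply Rle_trans; [| apply Rabs_Im_le_Cmod]. right. f_equal. simpl. ring.
Qed.

Lemma harmonic_conjugate_C1 u ux uy ut :
  C1_cl_B u ux uy -> harmonic_conjugate_on_B u ut -> cont_on_cl_B ut ->
  C1_cl_B ut (fun x y => - uy x y) ux.
Proof.
  intros [_ [Hux [Huy Hd]]] Hconj Hut.
  split; [exact Hut |]. split.
  { apply (cont_on_cl_B_comp2 (fun a _ => - a) uy uy); [| exact Huy ..].
    intros a b. apply continuity_2d_pt_opp, continuity_2d_pt_id1. }
  split; [exact Hux |].
  intros x y HB. destruct (Hconj (x, y) HB) as [l Hl].
  destruct (is_C_derive_horizontal _ x y l Hl) as [Dux Dutx].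
  destruct (is_C_derive_vertical _ x y l Hl) as [Duy Duty].
  destruct (Hd x y HB) as [D1 D2]. apply is_derive_Reals in D1, D2.
  assert (E1 : ux x y = fst l) by exact (uniqueness_limite _ _ _ _ D1 Dux).
  assert (E2 : uy x y = - snd l) by exact (uniqueness_limite _ _ _ _ D2 Duy).
  split; apply is_derive_Reals; [rewrite E2, Ropp_involutive | rewrite E1]; assumption.
Qed.

(** * Boundary tangents *)

Lemma tangential_derivatives_not_antipodal ux uy vx vy x y :
  x ^ 2 + y ^ 2 = 1 -> ux x y * vy x y - uy x y * vx x y > 0 ->
  not_antipodal (tangential_derivative ux uy x y) (tangential_derivative vx vy x y)
    (tangential_derivative ux uy x y) (tangential_derivative (fun x y => - uy x y) ux x y).
Proof.
  unfold tangential_derivative. intros Hxy Hdet.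
  set (a := ux x y) in *. set (b := uy x y) in *.
  set (p := vx x y) in *. set (q := vy x y) in *.
  set (dtu := - y * a + x * b). set (dtv := - y * p + x * q). set (dnu := - y * - b + x * a).
  assert (Hjac : dtv * dnu = (a * q - b * p) + (y * q + x * p) * dtu).
  { unfold dtu, dtv, dnu. replace (a * q - b * p) with ((a * q - b * p) * (x ^ 2 + y ^ 2))
      by (rewrite Hxy; ring). ring. }
  apply not_antipodal_of_dot_or_det.
  destruct (Req_dec dtu 0) as [Hdtu | Hdtu]; [left; rewrite Hdtu in *; nra |].
  destruct (Req_dec dnu dtv) as [Heq | Hneq]; [left; rewrite Heq; nra |].
  right. replace (dtu * dnu - dtv * dtu) with (dtu * (dnu - dtv)) by ring.
  apply Rmult_integral_contrapositive_currified; lra.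
Qed.

Lemma continuity_pt_boundary_tangent w wx wy th :
  C1_cl_B w wx wy -> continuity_pt (fun t => tangential_derivative wx wy (cos t) (sin t)) th.
Proof.
  intros [_ [Hwx [Hwy _]]].
  apply continuity_pt_on_circle, cont_on_cl_B_tangential_derivative; assumption.
Qed.

Lemma circle_periodic (F : R -> R -> R) : F (cos (2 * PI)) (sin (2 * PI)) = F (cos 0) (sin 0).
Proof. now rewrite cos_2PI, sin_2PI, cos_0, sin_0. Qed.

Lemma is_WN_boundary w1 w1x w1y w2 w2x w2y phi k :
  C1_cl_B w1 w1x w1y -> C1_cl_B w2 w2x w2y ->
  (forall t, 0 < tangential_derivative w1x w1y (cos t) (sin t) ^ 2
                 + tangential_derivative w2x w2y (cos t) (sin t) ^ 2) ->
  continuity phi ->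
  polar_angle_on (2 * PI) (fun t => tangential_derivative w1x w1y (cos t) (sin t))
    (fun t => tangential_derivative w2x w2y (cos t) (sin t)) phi ->
  phi (2 * PI) - phi 0 = 2 * PI * IZR k ->
  is_WN (fun th => w1 (cos th) (sin th)) (fun th => w2 (cos th) (sin th)) k.
Proof.
  intros Hw1 Hw2 Hnz Hphi Hpolar Hk.
  exists (fun t => tangential_derivative w1x w1y (cos t) (sin t)),
    (fun t => tangential_derivative w2x w2y (cos t) (sin t)), phi.
  split; [| split; [exact Hphi | split; [exact Hpolar | exact Hk]]].
  intros t _. split; [| split; [| split; [| split]]].
  - now apply is_derive_boundary_circle.
  - now apply is_derive_boundary_circle.
  - now apply (continuity_pt_boundary_tangent w1).
  - now apply (continuity_pt_boundary_tangent w2).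
  - intro E. injection E as E1 E2. specialize (Hnz t). rewrite E1, E2 in Hnz. lra.
Qed.

Theorem theorem3p9
  (u v ux uy vx vy ut : R -> R -> R)
  (hu1 : C1_cl_B u ux uy) (hv1 : C1_cl_B v vx vy)
  (hu : harmonic_on_B u) (hv : harmonic_on_B v)
  (hconj : harmonic_conjugate_on_B u ut)
  (hut : cont_on_cl_B ut)
  (hdet : forall x y, on_dB x y -> ux x y * vy x y - uy x y * vx x y > 0) :
  exists k : Z,
    is_WN (fun th => u (cos th) (sin th)) (fun th => ut (cos th) (sin th)) k /\
    is_WN (fun th => u (cos th) (sin th)) (fun th => v (cos th) (sin th)) k.
Proof.
  pose proof (harmonic_conjugate_C1 u ux uy ut hu1 hconj hut) as hut1.
  assert (Hanti : forall t, not_antipodal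
    (tangential_derivative ux uy (cos t) (sin t)) (tangential_derivative vx vy (cos t) (sin t))
    (tangential_derivative ux uy (cos t) (sin t))
    (tangential_derivative (fun x y => - uy x y) ux (cos t) (sin t))).
  { intro t. pose proof (sin2_cos2 t) as Ht. unfold Rsqr in Ht.
    apply tangential_derivatives_not_antipodal; [| apply hdet; unfold on_dB]; lra. }
  destruct (same_winding_of_not_antipodal
              (fun t => tangential_derivative ux uy (cos t) (sin t))
              (fun t => tangential_derivative vx vy (cos t) (sin t))
              (fun t => tangential_derivative ux uy (cos t) (sin t))
              (fun t => tangential_derivative (fun x y => - uy x y) ux (cos t) (sin t)))
    as [k [phi [psi [Hphi [Hpolar_phi [Hk_phi [Hpsi [Hpolar_psi Hk_psi]]]]]]]];
    try (intro; eapply continuity_pt_boundary_tangent; eassumption);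
    try apply circle_periodic; [exact Hanti |].
  exists k. split.
  - apply (is_WN_boundary u ux uy ut (fun x y => - uy x y) ux psi k); try assumption.
    intro t. exact (not_antipodal_nonzero_l _ _ _ _ (not_antipodal_sym _ _ _ _ (Hanti t))).
  - apply (is_WN_boundary u ux uy v vx vy phi k); try assumption.
    intro t. exact (not_antipodal_nonzero_l _ _ _ _ (Hanti t)).
Qed.
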